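(* Let $c\in C^\infty(\mathbb{T}^1)$ (complex-valued), $q\in\mathbb{C}$, and $L=\partial_t+c(t)\partial_x+q$ on $\mathbb{T}^1\times\mathbb{R}$. Suppose $f\in(\ker L^t)^0$. Then for every $\xi\in\mathbb{R}$ the ordinary differential equation $$\partial_tw(t)+i(\xi c(t)-iq)w(t)=\widehat f(t,\xi),\qquad t\in\mathbb{T}^1,$$ admits a solution $w\in C^\infty(\mathbb{T}^1)$.
   Context: $\mathbb{T}^1=\mathbb{R}/2\pi\mathbb{Z}$. $\mathcal{S}(\mathbb{T}^1\times\mathbb{R})$ is the space of $f\in C^\infty(\mathbb{T}^1\times\mathbb{R})$ with $\sup_{t,x}|x^\gamma\partial_t^\alpha\partial_x^\beta f(t,x)|<\infty$ for all $\alpha,\beta,\gamma\in\mathbb{N}_0$, $\mathcal{S}'(\mathbb{T}^1\times\mathbb{R})$ its dual. $\widehat f(t,\xi)=\int_{\mathbb{R}}f(t,x)e^{-ix\xi}\,dx$ is the partial Fourier transform in $x$. $L^tv=-\partial_tv-c(t)\partial_xv+qv$ is the transpose of $L$, and $(\ker L^t)^0=\{f\in\mathcal{S}(\mathbb{T}^1\times\mathbb{R}):\langle v,f\rangle=0\text{ for all }v\in\mathcal{S}'(\mathbb{T}^1\times\mathbb{R})\text{ with }L^tv=0\}$. *)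

From Stdlib Require Import Reals List.
From Coquelicot Require Import Coquelicot.
Set Implicit Arguments.

Local Open Scope R_scope.

Definition reC (z : C) : R := fst z.
Definition imC (z : C) : R := snd z.

Definition smooth1 (g : R -> R) : Prop := forall (n : nat) (t : R), ex_derive_n g n t.

Definition periodic1 (g : R -> C) : Prop := forall t : R, g (t + 2 * PI) = g t.

Definition Cinf_T1 (g : R -> C) : Prop :=
  periodic1 g /\ smooth1 (fun t => reC (g t)) /\ smooth1 (fun t => imC (g t)).

Definition Cderive (g : R -> C) (t : R) : C :=
  (Derive (fun s => reC (g s)) t, Derive (fun s => imC (g s)) t).

Definition Dt (f : R -> R -> R) : R -> R -> R := fun t x => Derive (fun s => f s x) t.
Definition Dx (f : R -> R -> R) : R -> R -> R := fun t x => Derive (fun y => f t y) x.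

(* iterated partial derivatives along a word (true = d/dt, false = d/dx),
   the head of the list being applied last *)
Fixpoint Dword (w : list bool) (f : R -> R -> R) : R -> R -> R :=
  match w with
  | nil => f
  | b :: w' => if b then Dt (Dword w' f) else Dx (Dword w' f)
  end.

Definition jointly_continuous (f : R -> R -> R) : Prop :=
  forall t x : R,
    filterlim (fun p : R * R => f (fst p) (snd p)) (locally (t, x)) (locally (f t x)).

Definition smooth2 (f : R -> R -> R) : Prop :=
  forall w : list bool,
    jointly_continuous (Dword w f) /\
    (forall t x : R, ex_derive (fun s => Dword w f s x) t) /\
    (forall t x : R, ex_derive (fun y => Dword w f t y) x).

Definition periodic2 (f : R -> R -> C) : Prop :=
  forall t x : R, f (t + 2 * PI) x = f t x.

Definition DtxC (a b : nat) (f : R -> R -> C) : R -> R -> C :=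
  fun t x =>
    (Dword (repeat true a ++ repeat false b) (fun s y => reC (f s y)) t x,
     Dword (repeat true a ++ repeat false b) (fun s y => imC (f s y)) t x).

Definition Schwartz (f : R -> R -> C) : Prop :=
  periodic2 f /\
  smooth2 (fun t x => reC (f t x)) /\ smooth2 (fun t x => imC (f t x)) /\
  forall a b g : nat, exists M : R, forall t x : R,
    Rabs (x ^ g) * Cmod (DtxC a b f t x) <= M.

(* the continuous dual S'(T^1 x R): linear functionals on S bounded by finitely
   many of the defining seminorms  sup_{t,x} |x^g d_t^a d_x^b f| *)
Definition linear_on_S (v : (R -> R -> C) -> C) : Prop :=
  forall (f g : R -> R -> C) (a b : C), Schwartz f -> Schwartz g ->
    v (fun t x => (a * f t x + b * g t x)%C) = (a * v f + b * v g)%C.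

Definition continuous_on_S (v : (R -> R -> C) -> C) : Prop :=
  exists (N : nat) (K : R), forall (f : R -> R -> C) (M : R), Schwartz f ->
    (forall a b g : nat, (a <= N)%nat -> (b <= N)%nat -> (g <= N)%nat ->
       forall t x : R, Rabs (x ^ g) * Cmod (DtxC a b f t x) <= M) ->
    Cmod (v f) <= K * M.

Definition tempered (v : (R -> R -> C) -> C) : Prop :=
  linear_on_S v /\ continuous_on_S v.

Definition Lop (c : R -> C) (q : C) (f : R -> R -> C) : R -> R -> C :=
  fun t x => (DtxC 1 0 f t x + c t * DtxC 0 1 f t x + q * f t x)%C.

(* L^t v = 0 in the sense of distributions: <L^t v, phi> = <v, L phi> = 0 *)
Definition in_ker_Lt (c : R -> C) (q : C) (v : (R -> R -> C) -> C) : Prop :=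
  forall phi : R -> R -> C, Schwartz phi -> v (Lop c q phi) = 0%C.

Definition annihilator_ker_Lt (c : R -> C) (q : C) (f : R -> R -> C) : Prop :=
  Schwartz f /\
  forall v : (R -> R -> C) -> C, tempered v -> in_ker_Lt c q v -> v f = 0%C.

Definition fourier_x (f : R -> R -> C) (t xi : R) : C :=
  @RInt_gen C_R_CompleteNormedModule
    (fun x => Cmult (f t x) (cos (x * xi), - sin (x * xi)))
    (Rbar_locally m_infty) (Rbar_locally p_infty).

(* Multiplying the equation by the integrating factor E(t) = exp (int_0^t a), where
   a = i (xi c - i q), turns it into (E w)' = E fhat(., xi); hence the solutions on R are
   w = E^-1 (w0 + int_0^t E fhat), and such a w is 2 pi-periodic iff
   w0 = E(2 pi)^-1 (w0 + J) with J = int_0^(2 pi) E fhat.  This affine equation for w0 is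
   solvable unless E(2 pi) = 1 and J <> 0.  In that resonant case
   v(g) = int_0^(2 pi) E(s) ghat(s, xi) ds is a tempered distribution, and since the Fourier
   transform turns L into d/dt + a, v(L phi) = [E phihat(., xi)]_0^(2 pi) = 0; thus v lies
   in ker L^t and J = v(f) = 0.
   The improper Fourier integrals are handled through the substitution x = tan u, which
   turns them into proper integrals over [-pi/2, pi/2] of functions that extend
   continuously by 0 to the endpoints, so that differentiation under the integral sign
   applies. *)

From Stdlib Require Import Reals Lra Lia List Classical_Prop.
From Coquelicot Require Import Coquelicot.
Local Open Scope R_scope.

Lemma Derive_n_Derive (f : R -> R) n x : Derive_n (Derive f) n x = Derive_n f (S n) x.
Proof.
  change (Derive_n (Derive_n f 1) n x = Derive_n f (S n) x).
  rewrite Derive_n_comp. f_equal. lia.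
Qed.

Lemma ex_derive_n_Derive f n x : ex_derive_n f (S n) x -> ex_derive_n (Derive f) n x.
Proof.
  destruct n; simpl; auto. intro H.
  apply ex_derive_ext with (f := Derive_n f (S n)); auto.
  intro; symmetry; apply Derive_n_Derive.
Qed.

Lemma ex_derive_n_S f n x :
  (forall y, ex_derive f y) -> ex_derive_n (Derive f) n x -> ex_derive_n f (S n) x.
Proof.
  destruct n; simpl; auto. intros _ H.
  apply ex_derive_ext with (f := Derive_n (Derive f) n); auto.
  intro; apply Derive_n_Derive.
Qed.

Definition smooth_upto (f : R -> R) n := forall k, (k <= n)%nat -> forall t, ex_derive_n f k t.

Lemma smooth1_iff_upto f : smooth1 f <-> forall n, smooth_upto f n.
Proof. split; intros H. intros n k _ t; apply H. intros n t; apply (H n n (le_n n)). Qed.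

Lemma smooth_upto_le f n m : (m <= n)%nat -> smooth_upto f n -> smooth_upto f m.
Proof. intros Hm H k Hk; apply H; lia. Qed.

Lemma smooth_upto_0 f : smooth_upto f 0.
Proof. intros k Hk t. replace k with 0%nat by lia. simpl; auto. Qed.

Lemma smooth_upto_ext f g n : (forall t, f t = g t) -> smooth_upto f n -> smooth_upto g n.
Proof. intros E H k Hk t. apply ex_derive_n_ext with f; auto. Qed.

Lemma smooth_upto_const a n : smooth_upto (fun _ => a) n.
Proof. intros k _ t; apply ex_derive_n_const. Qed.

Lemma smooth_upto_plus f g n :
  smooth_upto f n -> smooth_upto g n -> smooth_upto (fun x => f x + g x) n.
Proof.
  intros Hf Hg k Hk t.
  apply ex_derive_n_plus; apply filter_forall; intros y j Hj; [apply Hf|apply Hg]; lia.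
Qed.

Lemma smooth_upto_Derive f n : smooth_upto f (S n) -> smooth_upto (Derive f) n.
Proof. intros H k Hk t. apply ex_derive_n_Derive. apply H. lia. Qed.

Lemma smooth_upto_S f n :
  (forall y, ex_derive f y) -> smooth_upto (Derive f) n -> smooth_upto f (S n).
Proof.
  intros Hd H k Hk t. destruct k. simpl; auto.
  apply ex_derive_n_S; auto. apply H; lia.
Qed.

Lemma smooth_upto_ex_derive f n t : smooth_upto f (S n) -> ex_derive f t.
Proof. intros H. apply (H 1%nat). lia. Qed.

Lemma smooth_upto_mult n : forall f g,
  smooth_upto f n -> smooth_upto g n -> smooth_upto (fun x => f x * g x) n.
Proof.
  induction n as [|n IHn]; intros f g Hf Hg; [apply smooth_upto_0|].
  assert (Df : forall t, ex_derive f t) by (intro; eapply smooth_upto_ex_derive; eauto).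
  assert (Dg : forall t, ex_derive g t) by (intro; eapply smooth_upto_ex_derive; eauto).
  apply smooth_upto_S; [intro; apply ex_derive_mult; auto|].
  apply smooth_upto_ext with (fun x => Derive f x * g x + f x * Derive g x).
  - intro t. rewrite Derive_mult; auto.
  - apply smooth_upto_plus; apply IHn; auto using smooth_upto_Derive;
      apply smooth_upto_le with (S n); auto.
Qed.

Lemma smooth_upto_minus f g n :
  smooth_upto f n -> smooth_upto g n -> smooth_upto (fun x => f x - g x) n.
Proof.
  intros Hf Hg. apply smooth_upto_ext with (fun x => f x + (-1) * g x); [intro; ring|].
  apply smooth_upto_plus, smooth_upto_mult; auto using smooth_upto_const.
Qed.

Lemma smooth1_plus f g : smooth1 f -> smooth1 g -> smooth1 (fun x => f x + g x).
Proof. rewrite !smooth1_iff_upto. intros; apply smooth_upto_plus; auto. Qed.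

Lemma smooth1_minus f g : smooth1 f -> smooth1 g -> smooth1 (fun x => f x - g x).
Proof. rewrite !smooth1_iff_upto. intros; apply smooth_upto_minus; auto. Qed.

Lemma smooth1_mult f g : smooth1 f -> smooth1 g -> smooth1 (fun x => f x * g x).
Proof. rewrite !smooth1_iff_upto. intros; apply smooth_upto_mult; auto. Qed.

Lemma smooth1_const a : smooth1 (fun _ => a).
Proof. rewrite smooth1_iff_upto. intros; apply smooth_upto_const. Qed.

Lemma smooth1_ext f g : (forall t, f t = g t) -> smooth1 f -> smooth1 g.
Proof. rewrite !smooth1_iff_upto. intros E H n; apply smooth_upto_ext with f; auto. Qed.

Lemma smooth1_ex_derive f t : smooth1 f -> ex_derive f t.
Proof. intro H; apply (H 1%nat). Qed.

Lemma smooth1_continuous f t : smooth1 f -> continuous f t.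
Proof. intro H; apply (ex_derive_continuous (V := R_NormedModule)), smooth1_ex_derive; auto. Qed.

Lemma smooth1_Derive f : smooth1 f -> smooth1 (Derive f).
Proof. rewrite !smooth1_iff_upto. intros H n; apply smooth_upto_Derive; auto. Qed.

Definition Csmooth (g : R -> C) : Prop :=
  smooth1 (fun t => fst (g t)) /\ smooth1 (fun t => snd (g t)).

Definition Ccontinuous (g : R -> C) : Prop :=
  forall t, continuous (fun s => fst (g s)) t /\ continuous (fun s => snd (g s)) t.

Definition is_Cderive (u : R -> C) (t : R) (d : C) : Prop :=
  is_derive (fun s => fst (u s)) t (fst d) /\ is_derive (fun s => snd (u s)) t (snd d).

Lemma Csmooth_const (k : C) : Csmooth (fun _ => k).
Proof. split; apply smooth1_const. Qed.

Lemma Csmooth_plus u v : Csmooth u -> Csmooth v -> Csmooth (fun t => u t + v t)%C.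
Proof. intros [U1 U2] [V1 V2]; split; apply smooth1_plus; auto. Qed.

Lemma Csmooth_mult u v : Csmooth u -> Csmooth v -> Csmooth (fun t => u t * v t)%C.
Proof.
  intros [U1 U2] [V1 V2]; split; simpl;
    [apply smooth1_minus | apply smooth1_plus]; apply smooth1_mult; auto.
Qed.

Lemma Csmooth_ext u v : (forall t, u t = v t) -> Csmooth u -> Csmooth v.
Proof.
  intros E [U1 U2]; split; [eapply smooth1_ext, U1 | eapply smooth1_ext, U2];
    intro; simpl; rewrite E; auto.
Qed.

Lemma Csmooth_continuous g : Csmooth g -> Ccontinuous g.
Proof. intros [G1 G2] t; split; apply smooth1_continuous; auto. Qed.

Lemma Csmooth_of_linear_ode (a b u : R -> C) :
  Csmooth a -> Csmooth b -> (forall t, is_Cderive u t (a t * u t + b t)%C) -> Csmooth u.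
Proof.
  intros [A1 A2] [B1 B2] Du. rewrite smooth1_iff_upto in A1, A2, B1, B2.
  assert (forall n, smooth_upto (fun t => fst (u t)) n /\ smooth_upto (fun t => snd (u t)) n)
    as Hn.
  { induction n as [|n [IH1 IH2]]; [split; apply smooth_upto_0|].
    split; apply smooth_upto_S.
    - intro y; exists (fst (a y * u y + b y)%C); apply Du.
    - apply smooth_upto_ext with (fun t => fst (a t) * fst (u t) - snd (a t) * snd (u t) + fst (b t)).
      + intro t; symmetry; apply is_derive_unique, Du.
      + apply smooth_upto_plus; auto.
        apply smooth_upto_minus; apply smooth_upto_mult; auto.
    - intro y; exists (snd (a y * u y + b y)%C); apply Du.
    - apply smooth_upto_ext with (fun t => fst (a t) * snd (u t) + snd (a t) * fst (u t) + snd (b t)).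
      + intro t; symmetry; apply is_derive_unique, Du.
      + apply smooth_upto_plus; auto.
        apply smooth_upto_plus; apply smooth_upto_mult; auto. }
  split; apply smooth1_iff_upto; intro n; apply Hn.
Qed.

Lemma continuous_plus_R (f g : R -> R) x :
  continuous f x -> continuous g x -> continuous (fun y => f y + g y) x.
Proof. apply (continuous_plus f g). Qed.

Lemma continuous_mult_R (f g : R -> R) x :
  continuous f x -> continuous g x -> continuous (fun y => f y * g y) x.
Proof. apply (continuous_mult f g). Qed.

Lemma continuous_minus_R (f g : R -> R) x :
  continuous f x -> continuous g x -> continuous (fun y => f y - g y) x.
Proof. apply (continuous_minus f g). Qed.

Lemma ex_RInt_continuous_R (f : R -> R) a b : (forall x, continuous f x) -> ex_RInt f a b.
Proof. intros; apply (ex_RInt_continuous (V := R_CompleteNormedModule)); auto. Qed.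

Lemma is_derive_const_R (k : R) t : is_derive (fun _ => k) t 0.
Proof. apply (is_derive_const (V := R_NormedModule)). Qed.

Lemma is_derive_plus_R (f g : R -> R) t a b :
  is_derive f t a -> is_derive g t b -> is_derive (fun s => f s + g s) t (a + b).
Proof. apply (is_derive_plus f g). Qed.

Lemma is_derive_minus_R (f g : R -> R) t a b :
  is_derive f t a -> is_derive g t b -> is_derive (fun s => f s - g s) t (a - b).
Proof. apply (is_derive_minus f g). Qed.

Lemma is_derive_mult_R (f g : R -> R) t a b :
  is_derive f t a -> is_derive g t b -> is_derive (fun s => f s * g s) t (a * g t + f t * b).
Proof. intros; apply (is_derive_mult f g); auto. intros; apply Rmult_comm. Qed.

Lemma is_derive_comp_R (f g : R -> R) t df dg :
  is_derive f (g t) df -> is_derive g t dg -> is_derive (fun s => f (g s)) t (dg * df).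
Proof. apply (is_derive_comp f g). Qed.

Lemma is_derive_eq_R (f : R -> R) t a b : is_derive f t a -> a = b -> is_derive f t b.
Proof. intros H <-; auto. Qed.

Lemma is_Cderive_eq u t d d' : is_Cderive u t d -> d = d' -> is_Cderive u t d'.
Proof. intros H <-; auto. Qed.

Lemma is_Cderive_const (k : C) t : is_Cderive (fun _ => k) t 0%C.
Proof. split; apply is_derive_const_R. Qed.

Lemma is_Cderive_plus u v t du dv :
  is_Cderive u t du -> is_Cderive v t dv -> is_Cderive (fun s => u s + v s)%C t (du + dv)%C.
Proof. intros [H1 H2] [K1 K2]; split; apply is_derive_plus_R; auto. Qed.

Lemma is_Cderive_opp u t d : is_Cderive u t d -> is_Cderive (fun s => - u s)%C t (- d)%C.
Proof.
  intros [H1 H2]; split;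
    [apply (is_derive_opp (fun s => fst (u s))) | apply (is_derive_opp (fun s => snd (u s)))]; auto.
Qed.

Lemma is_Cderive_mult u v t du dv : is_Cderive u t du -> is_Cderive v t dv ->
  is_Cderive (fun s => u s * v s)%C t (du * v t + u t * dv)%C.
Proof.
  intros [H1 H2] [K1 K2]; split; simpl.
  - eapply is_derive_eq_R; [apply is_derive_minus_R; apply is_derive_mult_R; eauto|]; simpl; ring.
  - eapply is_derive_eq_R; [apply is_derive_plus_R; apply is_derive_mult_R; eauto|]; simpl; ring.
Qed.

Lemma is_Cderive_Cderive u t d : is_Cderive u t d -> Cderive u t = d.
Proof.
  intros [H1 H2]. unfold Cderive, reC, imC.
  apply injective_projections; simpl; apply is_derive_unique; auto.
Qed.

Definition Cexp (z : C) : C := (exp (fst z) * cos (snd z), exp (fst z) * sin (snd z)).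

Lemma Cexp_plus z w : Cexp (z + w)%C = (Cexp z * Cexp w)%C.
Proof.
  unfold Cexp; apply injective_projections; simpl;
    rewrite ?exp_plus, ?cos_plus, ?sin_plus; ring.
Qed.

Lemma Cexp_0 : Cexp 0%C = 1%C.
Proof. unfold Cexp; apply injective_projections; simpl; rewrite ?exp_0, ?cos_0, ?sin_0; ring. Qed.

Lemma Cexp_opp_mul z : (Cexp (- z) * Cexp z)%C = 1%C.
Proof. rewrite <- Cexp_plus, Cplus_comm, Cplus_opp_r. apply Cexp_0. Qed.

Lemma is_Cderive_Cexp a t da :
  is_Cderive a t da -> is_Cderive (fun s => Cexp (a s)) t (da * Cexp (a t))%C.
Proof.
  intros [H1 H2]. unfold Cexp. split; simpl.
  - eapply is_derive_eq_R.
    + apply is_derive_mult_R; apply is_derive_comp_R;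
        eauto using is_derive_exp, is_derive_cos.
    + simpl; ring.
  - eapply is_derive_eq_R.
    + apply is_derive_mult_R; apply is_derive_comp_R;
        eauto using is_derive_exp, is_derive_sin.
    + simpl; ring.
Qed.

Lemma RInt_lin_R (f g : R -> R) al be a b : ex_RInt f a b -> ex_RInt g a b ->
  RInt (fun y => al * f y + be * g y) a b = al * RInt f a b + be * RInt g a b.
Proof.
  intros Hf Hg.
  rewrite (RInt_plus (fun y => al * f y) (fun y => be * g y));
    [rewrite !(RInt_scal _ _ _ _ Hf), !(RInt_scal _ _ _ _ Hg) | ..]; try reflexivity.
  all: apply (ex_RInt_scal (V := R_CompleteNormedModule)); auto.
Qed.

Lemma Ccontinuous_const (k : C) : Ccontinuous (fun _ => k).
Proof. split; apply continuous_const. Qed.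

Lemma Ccontinuous_mult u v : Ccontinuous u -> Ccontinuous v -> Ccontinuous (fun s => u s * v s)%C.
Proof.
  intros U V t; destruct (U t), (V t); split; simpl;
    [apply continuous_minus_R | apply continuous_plus_R]; apply continuous_mult_R; auto.
Qed.

Definition Cprimitive (g : R -> C) (t : R) : C :=
  (RInt (fun s => fst (g s)) 0 t, RInt (fun s => snd (g s)) 0 t).

Lemma Cprimitive_ext g h t : (forall s, g s = h s) -> Cprimitive g t = Cprimitive h t.
Proof. intros E; unfold Cprimitive; f_equal; apply RInt_ext; intros; rewrite E; auto. Qed.

Lemma Cprimitive_0 g : Cprimitive g 0 = 0%C.
Proof. unfold Cprimitive; rewrite !(RInt_point (V := R_CompleteNormedModule)); reflexivity. Qed.

Lemma is_derive_RInt_0_R (g : R -> R) t :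
  (forall x, continuous g x) -> is_derive (fun t => RInt g 0 t) t (g t).
Proof.
  intros G. apply (is_derive_RInt g (fun t => RInt g 0 t) 0 t); auto.
  apply filter_forall; intros.
  apply (RInt_correct (V := R_CompleteNormedModule)), ex_RInt_continuous_R; auto.
Qed.

Lemma is_Cderive_Cprimitive g t : Ccontinuous g -> is_Cderive (Cprimitive g) t (g t).
Proof. intros G; split; apply is_derive_RInt_0_R; intro; apply G. Qed.

Lemma RInt_0_shift_R (g : R -> R) T t : (forall x, continuous g x) ->
  RInt g 0 (t + T) = RInt g 0 T + RInt (fun y => g (y + T)) 0 t.
Proof.
  intros G. rewrite <- (RInt_Chasles g 0 T (t + T)) by (apply ex_RInt_continuous_R; auto).
  pose proof (RInt_comp_lin g 1 T 0 t) as E.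
  replace (1 * 0 + T) with T in E by ring. replace (1 * t + T) with (t + T) in E by ring.
  rewrite <- E by (apply ex_RInt_continuous_R; auto). unfold plus; simpl. f_equal.
  apply RInt_ext. intros x _. unfold scal; simpl; unfold mult; simpl.
  replace (1 * x + T) with (x + T) by ring. ring.
Qed.

Lemma Cprimitive_shift g T t : Ccontinuous g ->
  Cprimitive g (t + T) = (Cprimitive g T + Cprimitive (fun s => g (s + T)%R) t)%C.
Proof.
  intros G. unfold Cprimitive.
  rewrite !(RInt_0_shift_R _ T t) by (intro; apply G). reflexivity.
Qed.

Lemma Cprimitive_plus g h t : Ccontinuous g -> Ccontinuous h ->
  Cprimitive (fun s => g s + h s)%C t = (Cprimitive g t + Cprimitive h t)%C.
Proof.
  intros G H. unfold Cprimitive. apply injective_projections; simpl.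
  - transitivity (RInt (fun s => 1 * fst (g s) + 1 * fst (h s)) 0 t);
      [apply RInt_ext; intros; simpl; ring|].
    rewrite RInt_lin_R by (apply ex_RInt_continuous_R; intro; apply G || apply H). ring.
  - transitivity (RInt (fun s => 1 * snd (g s) + 1 * snd (h s)) 0 t);
      [apply RInt_ext; intros; simpl; ring|].
    rewrite RInt_lin_R by (apply ex_RInt_continuous_R; intro; apply G || apply H). ring.
Qed.

Lemma Cprimitive_scal (k : C) g t : Ccontinuous g ->
  Cprimitive (fun s => k * g s)%C t = (k * Cprimitive g t)%C.
Proof.
  intros G. unfold Cprimitive. apply injective_projections; simpl.
  - transitivity (RInt (fun s => fst k * fst (g s) + (- snd k) * snd (g s)) 0 t);
      [apply RInt_ext; intros; simpl; ring|].
    rewrite RInt_lin_R by (apply ex_RInt_continuous_R; intro; apply G). ring.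
  - transitivity (RInt (fun s => fst k * snd (g s) + snd k * fst (g s)) 0 t);
      [apply RInt_ext; intros; simpl; ring|].
    rewrite RInt_lin_R by (apply ex_RInt_continuous_R; intro; apply G). ring.
Qed.

Lemma Cmod_le_of_components (z : C) K : Rabs (fst z) <= K -> Rabs (snd z) <= K -> Cmod z <= 2 * K.
Proof.
  intros H1 H2. eapply Rle_trans; [apply Cmod_2Rmax|].
  assert (S : sqrt 2 <= 2).
  { pose proof (sqrt_pos 2). pose proof (sqrt_sqrt 2 ltac:(lra)). nra. }
  assert (Rmax (Rabs (fst z)) (Rabs (snd z)) <= K) by (apply Rmax_lub; auto).
  pose proof (Rmax_l (Rabs (fst z)) (Rabs (snd z))). pose proof (Rabs_pos (fst z)).
  pose proof (sqrt_pos 2). nra.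
Qed.

Lemma Rabs_fst_le_Cmod (z : C) : Rabs (fst z) <= Cmod z.
Proof. eapply Rle_trans, Rmax_Cmod. apply Rmax_l. Qed.

Lemma Rabs_snd_le_Cmod (z : C) : Rabs (snd z) <= Cmod z.
Proof. eapply Rle_trans, Rmax_Cmod. apply Rmax_r. Qed.

Lemma Cmod_Cprimitive_le g t K : 0 <= t -> Ccontinuous g ->
  (forall s, 0 <= s <= t -> Cmod (g s) <= K) -> Cmod (Cprimitive g t) <= 2 * (t * K).
Proof.
  intros Ht G HK. replace (t * K) with ((t - 0) * K) by ring.
  apply Cmod_le_of_components; apply abs_RInt_le_const; auto;
    try (apply ex_RInt_continuous_R; intro; apply G);
    intros s Hs; (eapply Rle_trans; [|apply (HK s Hs)]).
  - apply Rabs_fst_le_Cmod.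
  - apply Rabs_snd_le_Cmod.
Qed.

Lemma Ccontinuous_bounded g a b : a <= b -> Ccontinuous g ->
  exists B, forall t, a <= t <= b -> Cmod (g t) <= B.
Proof.
  intros Hab G.
  destruct (continuity_ab_maj (fun t => Rabs (fst (g t)) + Rabs (snd (g t))) a b Hab)
    as [Mx [HM _]].
  { intros t _. apply continuity_pt_filterlim.
    apply (continuous_plus_R (fun s => Rabs (fst (g s))) (fun s => Rabs (snd (g s)))).
    - apply (continuous_Rabs_comp (fun s => fst (g s))), G.
    - apply (continuous_Rabs_comp (fun s => snd (g s))), G. }
  exists (2 * (Rabs (fst (g Mx)) + Rabs (snd (g Mx)))). intros t Ht.
  specialize (HM t Ht). pose proof (Rabs_pos (fst (g t))). pose proof (Rabs_pos (snd (g t))).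
  apply Cmod_le_of_components; lra.
Qed.

(** * Improper integrals through the substitution x = tan u *)

Lemma ball_R (x e y : R) : ball x e y <-> Rabs (y - x) < e.
Proof. unfold ball; simpl; unfold AbsRing_ball, abs, minus, plus, opp; simpl. tauto. Qed.

Lemma continuous_R_eps (k : R -> R) x : continuous k x <->
  forall eps : posreal, exists d : posreal, forall y, Rabs (y - x) < d -> Rabs (k y - k x) < eps.
Proof.
  split.
  - intros H eps. apply filterlim_locally with (eps := eps) in H.
    destruct H as [d Hd]. exists d. intros y Hy. apply ball_R, Hd, ball_R; auto.
  - intros H. apply filterlim_locally. intro eps. destruct (H eps) as [d Hd].
    exists d. intros y Hy. apply ball_R, Hd, ball_R; auto.
Qed.

Lemma continuity_2d_pt_snd (G : R -> R -> R) t u :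
  continuity_2d_pt G t u -> continuous (G t) u.
Proof.
  intros H. apply continuous_R_eps. intro eps. destruct (H eps) as [d Hd]. exists d.
  intros y Hy. apply Hd; auto. rewrite Rminus_eq_0, Rabs_R0. apply cond_pos.
Qed.

Lemma continuity_2d_pt_of_snd (h : R -> R) t u :
  continuous h u -> continuity_2d_pt (fun _ x => h x) t u.
Proof.
  intros H. apply continuity_1d_2d_pt_comp with (g := fun _ v => v).
  - apply continuity_pt_filterlim; auto.
  - apply continuity_2d_pt_id2.
Qed.

Lemma continuity_2d_pt_comp_snd (H : R -> R -> R) (phi : R -> R) t0 u0 :
  continuity_2d_pt H t0 (phi u0) -> continuous phi u0 ->
  continuity_2d_pt (fun t u => H t (phi u)) t0 u0.
Proof.
  intros HH Hp eps. destruct (HH eps) as [d1 Hd1].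
  destruct (proj1 (continuous_R_eps phi u0) Hp d1) as [d2 Hd2].
  assert (Hm : 0 < Rmin d1 d2) by (apply Rmin_pos; apply cond_pos).
  exists (mkposreal _ Hm). simpl. intros s v Hs Hv.
  apply Hd1; [apply Rlt_le_trans with (1 := Hs), Rmin_l|].
  apply Hd2. apply Rlt_le_trans with (1 := Hv), Rmin_r.
Qed.

(* The integrand of int h(x) dx after x = tan u, extended by 0 outside (-pi/2, pi/2). *)
Definition tan_pullback (h : R -> R) (u : R) : R :=
  if Rlt_dec (Rabs u) (PI / 2) then h (tan u) * (1 + tan u ^ 2) else 0.

Definition tan_integral (h : R -> R) : R := RInt (tan_pullback h) (- (PI / 2)) (PI / 2).

Definition decay_bound (h : R -> R) (M : R) : Prop :=
  forall x, Rabs (h x) * (1 + x ^ 2) ^ 2 <= M.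

Definition decaying (h : R -> R) : Prop := (forall x, continuous h x) /\ exists M, decay_bound h M.

Lemma tan_integral_ext h h' : (forall x, h x = h' x) -> tan_integral h = tan_integral h'.
Proof.
  intros E. unfold tan_integral. apply RInt_ext. intros x _.
  unfold tan_pullback. destruct Rlt_dec; auto. rewrite E; auto.
Qed.

Lemma decay_bound_nonneg h M : decay_bound h M -> 0 <= M.
Proof.
  intros H. eapply Rle_trans, (H 0).
  apply Rmult_le_pos; [apply Rabs_pos | apply pow_le; nra].
Qed.

Lemma Rabs_lt_PI2 u : Rabs u < PI / 2 -> - (PI / 2) < u < PI / 2.
Proof. intros H. apply Rabs_def2 in H. lra. Qed.

Lemma cos_pos_of_Rabs_lt_PI2 u : Rabs u < PI / 2 -> 0 < cos u.
Proof. intros H; apply Rabs_lt_PI2 in H; apply cos_gt_0; lra. Qed.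

Lemma one_plus_tan_sqr u : cos u <> 0 -> 1 + tan u ^ 2 = / (cos u ^ 2).
Proof.
  intros H. unfold tan. pose proof (sin2_cos2 u) as E. unfold Rsqr in E.
  transitivity ((sin u * sin u + cos u * cos u) / cos u ^ 2); [field; auto|].
  rewrite E. field; auto.
Qed.

(* Where the pullback is nonzero, |h(tan u)| (1 + tan^2 u) <= M cos^4 u / cos^2 u. *)
Lemma tan_pullback_bound h M u : decay_bound h M -> Rabs (tan_pullback h u) <= M * cos u ^ 2.
Proof.
  intros H. pose proof (decay_bound_nonneg _ _ H) as M0. unfold tan_pullback.
  destruct Rlt_dec as [r|r].
  - pose proof (cos_pos_of_Rabs_lt_PI2 _ r) as Cu. specialize (H (tan u)).
    rewrite one_plus_tan_sqr in H |- * by lra.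
    set (k := / cos u ^ 2) in *.
    assert (K : 0 < k) by (unfold k; apply Rinv_0_lt_compat; apply pow_lt; lra).
    assert (Ek : cos u ^ 2 = / k) by (unfold k; rewrite Rinv_inv; auto).
    rewrite Ek, Rabs_mult, (Rabs_pos_eq k) by lra.
    apply Rmult_le_reg_r with k; auto. replace (M * / k * k) with M by (field; lra).
    replace (Rabs (h (tan u)) * k * k) with (Rabs (h (tan u)) * k ^ 2) by ring. lra.
  - rewrite Rabs_R0. apply Rmult_le_pos; auto. apply pow2_ge_0.
Qed.

Lemma continuous_one_plus_tan_sqr u : Rabs u < PI / 2 -> continuous (fun v => 1 + tan v ^ 2) u.
Proof.
  intros H. apply (ex_derive_continuous (V := R_NormedModule)).
  auto_derive. eexists. apply is_derive_tan. pose proof (cos_pos_of_Rabs_lt_PI2 _ H); lra.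
Qed.

Lemma continuity_2d_pt_tan_pullback (H : R -> R -> R) M :
  (forall t x, continuity_2d_pt H t x) -> (forall t, decay_bound (H t) M) ->
  forall t u, continuity_2d_pt (fun t u => tan_pullback (H t) u) t u.
Proof.
  intros HC HD t0 u0.
  destruct (Rlt_dec (Rabs u0) (PI / 2)) as [r|r].
  - assert (dpos : 0 < PI / 2 - Rabs u0) by lra.
    apply continuity_2d_pt_ext_loc with (fun s v => H s (tan v) * (1 + tan v ^ 2)).
    + exists (mkposreal _ dpos). simpl. intros s v _ Hv. unfold tan_pullback.
      destruct Rlt_dec as [r'|r']; auto. exfalso; apply r'.
      pose proof (Rabs_triang_inv v u0). lra.
    + apply continuity_2d_pt_mult.
      * apply continuity_2d_pt_comp_snd; auto.
        apply (ex_derive_continuous (V := R_NormedModule)).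
        eexists. apply is_derive_tan. pose proof (cos_pos_of_Rabs_lt_PI2 _ r); lra.
      * apply continuity_1d_2d_pt_comp with (f := fun v => 1 + tan v ^ 2) (g := fun _ v => v).
        -- apply continuity_pt_filterlim, continuous_one_plus_tan_sqr; auto.
        -- apply continuity_2d_pt_id2.
  - destruct (Rle_lt_or_eq_dec (PI / 2) (Rabs u0)) as [r2|r2]; [lra| |].
    + assert (dpos : 0 < Rabs u0 - PI / 2) by lra.
      apply continuity_2d_pt_ext_loc with (fun _ _ => 0).
      * exists (mkposreal _ dpos). simpl. intros s v _ Hv. unfold tan_pullback.
        destruct Rlt_dec as [r'|r']; auto. exfalso.
        pose proof (Rabs_triang_inv u0 v). rewrite Rabs_minus_sym in Hv. lra.
      * apply continuity_2d_pt_const.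
    + (* at u0 = +-pi/2 the bound M cos^2 u of tan_pullback_bound squeezes it to 0 *)
      intros eps. assert (c0 : cos u0 = 0).
      { destruct (Rcase_abs u0) as [n|n].
        - rewrite Rabs_left in r2 by auto. replace u0 with (- (PI / 2)) by lra.
          rewrite cos_neg; apply cos_PI2.
        - rewrite Rabs_right in r2 by auto. rewrite <- r2. apply cos_PI2. }
      assert (Ccos : continuous (fun v => M * cos v ^ 2) u0).
      { apply (ex_derive_continuous (V := R_NormedModule)). auto_derive. auto. }
      destruct (proj1 (continuous_R_eps _ _) Ccos eps) as [d Hd].
      exists d. intros s v _ Hv. specialize (Hd v Hv). rewrite c0 in Hd.
      unfold tan_pullback at 2. destruct Rlt_dec; [lra|]. rewrite Rminus_0_r.
      eapply Rle_lt_trans; [apply tan_pullback_bound, HD|].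
      replace (M * 0 ^ 2) with 0 in Hd by ring. rewrite Rminus_0_r in Hd.
      eapply Rle_lt_trans, Hd. apply Rle_abs.
Qed.

Lemma continuous_tan_pullback h M :
  (forall x, continuous h x) -> decay_bound h M -> forall u, continuous (tan_pullback h) u.
Proof.
  intros HC HD u.
  apply (continuity_2d_pt_snd (fun _ u => tan_pullback h u) 0 u).
  apply (continuity_2d_pt_tan_pullback (fun _ x => h x) M); auto.
  intros; apply continuity_2d_pt_of_snd; auto.
Qed.

Lemma ex_RInt_tan_pullback h a b : decaying h -> ex_RInt (tan_pullback h) a b.
Proof.
  intros [HC [M HD]]. apply ex_RInt_continuous_R. intros; eapply continuous_tan_pullback; eauto.
Qed.

Lemma is_RInt_gen_of_RInt {V : NormedModule R_AbsRing} (f : R -> V) Fa Fb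
  {FFa : Filter Fa} {FFb : Filter Fb} (G : R -> R -> V) l :
  (forall a b, is_RInt f a b (G a b)) ->
  filterlim (fun ab => G (fst ab) (snd ab)) (filter_prod Fa Fb) (locally l) ->
  is_RInt_gen f Fa Fb l.
Proof.
  intros HG HL P HP. unfold filtermapi. specialize (HL P HP).
  eapply filter_imp, HL. intros ab H. exists (G (fst ab) (snd ab)). auto.
Qed.

Lemma atan_pinfty : filterlim atan (Rbar_locally p_infty) (locally (PI / 2)).
Proof.
  apply filterlim_locally. intro eps. pose proof PI_RGT_0.
  set (d := Rmin (eps / 2) (PI / 4)).
  assert (0 < d) by (unfold d; apply Rmin_pos; [pose proof (cond_pos eps)|]; lra).
  assert (d <= PI / 4) by apply Rmin_r. assert (d <= eps / 2) by apply Rmin_l.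
  exists (tan (PI / 2 - d)). intros x Hx.
  apply ball_R. apply atan_increasing in Hx. rewrite atan_tan in Hx by lra.
  pose proof (atan_bound x). rewrite Rabs_left by lra. lra.
Qed.

Lemma atan_minfty : filterlim atan (Rbar_locally m_infty) (locally (- (PI / 2))).
Proof.
  apply filterlim_locally. intro eps. pose proof PI_RGT_0.
  set (d := Rmin (eps / 2) (PI / 4)).
  assert (0 < d) by (unfold d; apply Rmin_pos; [pose proof (cond_pos eps)|]; lra).
  assert (d <= PI / 4) by apply Rmin_r. assert (d <= eps / 2) by apply Rmin_l.
  exists (tan (- (PI / 2) + d)). intros x Hx.
  apply ball_R. apply atan_increasing in Hx. rewrite atan_tan in Hx by lra.
  pose proof (atan_bound x). rewrite Rabs_right by lra. lra.
Qed.

Lemma RInt_tan_pullback h a b : decaying h ->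
  RInt h a b = RInt (tan_pullback h) (atan a) (atan b).
Proof.
  intros [HC _].
  assert (Hin : forall x, Rmin (atan a) (atan b) <= x <= Rmax (atan a) (atan b) ->
    Rabs x < PI / 2).
  { intros x Hx. pose proof (atan_bound a); pose proof (atan_bound b).
    assert (Rmin (atan a) (atan b) > - (PI / 2)) by (apply Rmin_glb_lt; lra).
    assert (Rmax (atan a) (atan b) < PI / 2) by (apply Rmax_lub_lt; lra).
    apply Rabs_def1; lra. }
  rewrite <- (tan_atan a) at 1. rewrite <- (tan_atan b) at 1.
  rewrite <- (RInt_comp h tan (fun u => tan u ^ 2 + 1)).
  - apply RInt_ext. intros x Hx. unfold tan_pullback. destruct Rlt_dec as [r|r].
    + unfold scal; simpl; unfold mult; simpl. ring.
    + exfalso. apply r, Hin. split; apply Rlt_le; apply Hx.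
  - intros; auto.
  - intros x Hx. specialize (Hin x Hx). split.
    + apply is_derive_tan. pose proof (cos_pos_of_Rabs_lt_PI2 _ Hin); lra.
    + eapply continuous_ext, continuous_one_plus_tan_sqr; eauto. intros; simpl; ring.
Qed.

Lemma is_RInt_gen_tan_integral h : decaying h ->
  is_RInt_gen h (Rbar_locally m_infty) (Rbar_locally p_infty) (tan_integral h).
Proof.
  intros Hh. pose proof Hh as [HC [M HD]].
  set (P := fun y => RInt (tan_pullback h) 0 y).
  assert (EX : forall a b, ex_RInt (tan_pullback h) a b) by (intros; apply ex_RInt_tan_pullback; auto).
  assert (PC : forall y, continuous P y).
  { intro y. apply (ex_derive_continuous (V := R_NormedModule)). eexists.
    apply is_derive_RInt_0_R. intro; eapply continuous_tan_pullback; eauto. }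
  apply is_RInt_gen_of_RInt with (G := fun a b => P (atan b) - P (atan a));
    [apply Rbar_locally_filter | apply Rbar_locally_filter | |].
  - intros a b. replace (P (atan b) - P (atan a)) with (RInt h a b).
    + apply (RInt_correct (V := R_CompleteNormedModule)), ex_RInt_continuous_R; auto.
    + rewrite RInt_tan_pullback by auto. unfold P.
      rewrite <- (RInt_Chasles (tan_pullback h) 0 (atan a) (atan b)) by auto.
      unfold plus; simpl. symmetry; apply Rplus_minus_l.
  - replace (tan_integral h) with (plus (P (PI / 2)) (opp (P (- (PI / 2))))).
    + apply (filterlim_comp_2 (G := locally (P (PI / 2))) (H := locally (opp (P (- (PI / 2)))))
        (fun ab : R * R => P (atan (snd ab))) (fun ab : R * R => opp (P (atan (fst ab)))) plus).
      * apply (filterlim_comp _ _ _ snd (fun y => P (atan y)) _ (Rbar_locally p_infty));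
          [apply filterlim_snd|].
        apply (filterlim_comp _ _ _ atan P _ (locally (PI / 2))); [apply atan_pinfty | apply PC].
      * apply (filterlim_comp _ _ _ fst (fun y => opp (P (atan y))) _ (Rbar_locally m_infty));
          [apply filterlim_fst|].
        apply (filterlim_comp _ _ _ atan (fun y => opp (P y)) _ (locally (- (PI / 2))));
          [apply atan_minfty|].
        apply (filterlim_comp _ _ _ P opp _ (locally (P (- (PI / 2))))); [apply PC|].
        apply (filterlim_opp (V := R_NormedModule)).
      * apply (filterlim_plus (V := R_NormedModule)).
    + unfold tan_integral, P.
      rewrite <- (RInt_Chasles (tan_pullback h) (- (PI / 2)) 0 (PI / 2)) by auto.
      rewrite <- (opp_RInt_swap (tan_pullback h) 0 (- (PI / 2))) by auto.
      unfold plus, opp; simpl. ring.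
Qed.

Lemma decay_bound_comb (a b p r : R -> R) Ma Mb :
  decay_bound a Ma -> decay_bound b Mb ->
  (forall x, Rabs (p x) <= 1) -> (forall x, Rabs (r x) <= 1) ->
  decay_bound (fun x => a x * p x + b x * r x) (Ma + Mb).
Proof.
  intros Ha Hb Hp Hr x. specialize (Ha x); specialize (Hb x); specialize (Hp x); specialize (Hr x).
  assert (0 <= (1 + x ^ 2) ^ 2) by (apply pow_le; nra).
  pose proof (Rabs_triang (a x * p x) (b x * r x)) as T. rewrite !Rabs_mult in T.
  pose proof (Rabs_pos (a x)). pose proof (Rabs_pos (b x)).
  pose proof (Rabs_pos (p x)). pose proof (Rabs_pos (r x)).
  assert (Rabs (a x) * Rabs (p x) <= Rabs (a x)) by nra.
  assert (Rabs (b x) * Rabs (r x) <= Rabs (b x)) by nra.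
  nra.
Qed.

Lemma decaying_comb (a b p r : R -> R) : decaying a -> decaying b ->
  (forall x, continuous p x) -> (forall x, continuous r x) ->
  (forall x, Rabs (p x) <= 1) -> (forall x, Rabs (r x) <= 1) ->
  decaying (fun x => a x * p x + b x * r x).
Proof.
  intros [Ca [Ma Ha]] [Cb [Mb Hb]] Cp Cr Bp Br. split.
  - intro x. apply continuous_plus_R; apply continuous_mult_R; auto.
  - exists (Ma + Mb). apply decay_bound_comb; auto.
Qed.

Lemma decaying_ext a b : (forall x, a x = b x) -> decaying a -> decaying b.
Proof.
  intros E [Ca [Ma Ha]]. split.
  - intro x; eapply continuous_ext; eauto.
  - exists Ma. intro x. rewrite <- E. auto.
Qed.

Lemma decaying_plus a b : decaying a -> decaying b -> decaying (fun x => a x + b x).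
Proof.
  intros Ha Hb. apply decaying_ext with (fun x => a x * 1 + b x * 1); [intro; ring|].
  apply decaying_comb; auto; intros; try apply continuous_const; rewrite Rabs_R1; lra.
Qed.

Lemma decaying_scal (k : R) a : decaying a -> decaying (fun x => k * a x).
Proof.
  intros [Ca [Ma Ha]]. split.
  - intro x. apply continuous_mult_R; auto. apply continuous_const.
  - exists (Rabs k * Ma). intro x. specialize (Ha x). rewrite Rabs_mult.
    pose proof (Rabs_pos k). nra.
Qed.

Lemma tan_integral_lin k1 k2 al be : decaying k1 -> decaying k2 ->
  tan_integral (fun x => al * k1 x + be * k2 x) = al * tan_integral k1 + be * tan_integral k2.
Proof.
  intros D1 D2. unfold tan_integral.
  rewrite <- RInt_lin_R by (apply ex_RInt_tan_pullback; auto).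
  apply RInt_ext. intros x _. unfold tan_pullback. simpl. destruct Rlt_dec; ring.
Qed.

Lemma tan_integral_bound k M : decaying k -> decay_bound k M -> Rabs (tan_integral k) <= PI * M.
Proof.
  intros Dk D. unfold tan_integral. pose proof PI_RGT_0.
  replace (PI * M) with ((PI / 2 - - (PI / 2)) * M) by field.
  apply abs_RInt_le_const; [lra | apply ex_RInt_tan_pullback; auto|].
  intros u _. eapply Rle_trans; [apply tan_pullback_bound, D|].
  pose proof (decay_bound_nonneg _ _ D). pose proof (COS_bound u).
  assert (cos u ^ 2 <= 1) by nra. nra.
Qed.

Lemma decay_bound_lim_pinfty k M : decay_bound k M -> filterlim k (Rbar_locally p_infty) (locally 0).
Proof.
  intros D. pose proof (decay_bound_nonneg _ _ D) as M0. apply filterlim_locally. intro eps.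
  pose proof (cond_pos eps) as ep.
  exists ((M + 1) / eps). intros x Hx. apply ball_R. rewrite Rminus_0_r.
  assert (X : 0 < x) by (eapply Rle_lt_trans, Hx; apply Rdiv_le_0_compat; lra).
  specialize (D x). pose proof (Rabs_pos (k x)).
  assert (x <= (1 + x ^ 2) ^ 2) by nra.
  assert (Rabs (k x) * x <= M) by nra.
  assert (M + 1 < eps * x).
  { apply Rmult_lt_compat_l with (r := eps) in Hx; auto.
    replace (eps * ((M + 1) / eps)) with (M + 1) in Hx by (field; lra). lra. }
  nra.
Qed.

Lemma decay_bound_lim_minfty k M : decay_bound k M -> filterlim k (Rbar_locally m_infty) (locally 0).
Proof.
  intros D. apply filterlim_ext with (fun x => k (- - x)); [intro; rewrite Ropp_involutive; auto|].
  apply (filterlim_comp _ _ _ Ropp (fun x => k (- x)) _ (Rbar_locally p_infty)).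
  - apply (filterlim_Rbar_opp m_infty).
  - apply decay_bound_lim_pinfty with M. intro x.
    replace (x ^ 2) with ((- x) ^ 2) by ring. apply D.
Qed.

Lemma tan_integral_derive_zero (Psi D : R -> R) :
  (forall x, is_derive Psi x (D x)) -> decaying Psi -> decaying D -> tan_integral D = 0.
Proof.
  intros HD [_ [MP DP]] DD.
  assert (DPsi : forall x, Derive Psi x = D x) by (intro; apply is_derive_unique, HD).
  assert (E1 : is_RInt_gen (Derive Psi) (Rbar_locally m_infty) (Rbar_locally p_infty) (0 - 0)).
  { apply is_RInt_gen_Derive; try apply Rbar_locally_filter.
    - apply filter_forall. intros ab x _. eexists; apply HD.
    - apply filter_forall. intros ab x _.
      apply continuous_ext with D; [intro; symmetry; apply DPsi | apply DD].
    - eapply decay_bound_lim_minfty; eauto.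
    - eapply decay_bound_lim_pinfty; eauto. }
  assert (E2 : is_RInt_gen (Derive Psi) (Rbar_locally m_infty) (Rbar_locally p_infty) (tan_integral D)).
  { apply is_RInt_gen_ext with D; try apply Rbar_locally_filter.
    - apply filter_forall. intros ab x _. symmetry; apply DPsi.
    - apply is_RInt_gen_tan_integral; auto. }
  apply (is_RInt_gen_unique (V := R_CompleteNormedModule)) in E1;
    try (apply Proper_StrongProper, Rbar_locally_filter).
  apply (is_RInt_gen_unique (V := R_CompleteNormedModule)) in E2;
    try (apply Proper_StrongProper, Rbar_locally_filter).
  rewrite <- E2, E1. simpl. ring.
Qed.

Definition uniformly_decaying (H : R -> R -> R) : Prop :=
  (forall t x, continuity_2d_pt H t x) /\ exists M, forall t, decay_bound (H t) M.

Lemma uniformly_decaying_slice H t : uniformly_decaying H -> decaying (H t).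
Proof.
  intros [HC [M HD]]. split; [intros; apply continuity_2d_pt_snd; auto | exists M; auto].
Qed.

Lemma uniformly_decaying_ext H H' :
  (forall t x, H t x = H' t x) -> uniformly_decaying H -> uniformly_decaying H'.
Proof.
  intros E [HC [M HD]]. split.
  - intros t x; eapply continuity_2d_pt_ext, HC; auto.
  - exists M; intros t x. rewrite <- E. apply HD.
Qed.

Lemma uniformly_decaying_comb (A B : R -> R -> R) (p r : R -> R) :
  uniformly_decaying A -> uniformly_decaying B ->
  (forall x, continuous p x) -> (forall x, continuous r x) ->
  (forall x, Rabs (p x) <= 1) -> (forall x, Rabs (r x) <= 1) ->
  uniformly_decaying (fun t x => A t x * p x + B t x * r x).
Proof.
  intros [CA [MA DA]] [CB [MB DB]] Cp Cr Bp Br. split.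
  - intros t x. apply continuity_2d_pt_plus; apply continuity_2d_pt_mult; auto;
      apply continuity_2d_pt_of_snd; auto.
  - exists (MA + MB). intro t. apply decay_bound_comb; auto.
Qed.

Lemma Derive_tan_pullback (H : R -> R -> R) s v :
  Derive (fun z => tan_pullback (H z) v) s = tan_pullback (Dt H s) v.
Proof.
  unfold tan_pullback, Dt. destruct Rlt_dec.
  - rewrite Rmult_comm, <- Derive_scal. apply Derive_ext. intros; ring.
  - apply Derive_const.
Qed.

Lemma is_derive_tan_integral_param H :
  uniformly_decaying H -> uniformly_decaying (Dt H) -> (forall t x, ex_derive (fun s => H s x) t) ->
  forall t, is_derive (fun t => tan_integral (H t)) t (tan_integral (Dt H t)).
Proof.
  intros N1 [C2 [M2 D2]] HD t. unfold tan_integral.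
  rewrite <- (RInt_ext (fun u => Derive (fun z => tan_pullback (H z) u) t))
    by (intros; apply Derive_tan_pullback).
  apply (is_derive_RInt_param (fun s u => tan_pullback (H s) u)).
  - apply filter_forall. intros y u _. unfold tan_pullback. destruct Rlt_dec.
    + apply ex_derive_mult; [apply HD | apply ex_derive_const].
    + apply ex_derive_const.
  - intros u _. apply continuity_2d_pt_ext with (fun s v => tan_pullback (Dt H s) v).
    + intros; symmetry; apply Derive_tan_pullback.
    + apply continuity_2d_pt_tan_pullback with M2; auto.
  - apply filter_forall. intros y. apply ex_RInt_tan_pullback, uniformly_decaying_slice; auto.
Qed.

Lemma tan_integral_derive_n (hs : nat -> R -> R -> R) :
  (forall n, uniformly_decaying (hs n)) -> (forall n t x, ex_derive (fun s => hs n s x) t) ->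
  (forall n t x, hs (S n) t x = Dt (hs n) t x) ->
  forall n t, ex_derive_n (fun t => tan_integral (hs 0%nat t)) n t /\
    Derive_n (fun t => tan_integral (hs 0%nat t)) n t = tan_integral (hs n t).
Proof.
  intros N D E.
  assert (ND : forall n t, is_derive (fun t => tan_integral (hs n t)) t (tan_integral (hs (S n) t))).
  { intros n t. rewrite (tan_integral_ext _ _ (E n t)).
    apply is_derive_tan_integral_param; auto.
    apply uniformly_decaying_ext with (hs (S n)); auto. }
  induction n as [|n IHn]; intros t; [simpl; auto|]. split; simpl.
  - apply ex_derive_ext with (fun t => tan_integral (hs n t)).
    + intro s; symmetry; apply (proj2 (IHn s)).
    + eexists; apply ND.
  - rewrite (Derive_ext _ (fun t => tan_integral (hs n t))) by (intro s; apply (proj2 (IHn s))).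
    apply is_derive_unique, ND.
Qed.

(** * The partial Fourier transform *)

Lemma Rabs_cos_le_1 a : Rabs (cos a) <= 1.
Proof. apply Rabs_le, COS_bound. Qed.

Lemma Rabs_sin_le_1 a : Rabs (sin a) <= 1.
Proof. apply Rabs_le, SIN_bound. Qed.

Lemma continuous_cos_mult (xi x : R) : continuous (fun y => cos (y * xi)) x.
Proof. apply (ex_derive_continuous (V := R_NormedModule)). auto_derive; auto. Qed.

Lemma continuous_opp_sin_mult (xi x : R) : continuous (fun y => - sin (y * xi)) x.
Proof. apply (ex_derive_continuous (V := R_NormedModule)). auto_derive; auto. Qed.

Definition re2 (g : R -> R -> C) (t x : R) : R := fst (g t x).
Definition im2 (g : R -> R -> C) (t x : R) : R := snd (g t x).

(* The real and imaginary parts of (A + i B)(t, x) e^(-i x xi). *)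
Definition fourier_re (A B : R -> R -> R) (xi t x : R) : R :=
  A t x * cos (x * xi) + B t x * sin (x * xi).
Definition fourier_im (A B : R -> R -> R) (xi t x : R) : R :=
  B t x * cos (x * xi) - A t x * sin (x * xi).

Definition fourier_tan (g : R -> R -> C) (xi t : R) : C :=
  (tan_integral (fourier_re (re2 g) (im2 g) xi t),
   tan_integral (fourier_im (re2 g) (im2 g) xi t)).

Definition decaying_slice (g : R -> R -> C) (t : R) : Prop :=
  decaying (re2 g t) /\ decaying (im2 g t).

Lemma fourier_im_as_comb A B xi t x :
  fourier_im A B xi t x = B t x * cos (x * xi) + A t x * - sin (x * xi).
Proof. unfold fourier_im. ring. Qed.

Lemma decay_bound_fourier A B xi t Ma Mb : decay_bound (A t) Ma -> decay_bound (B t) Mb ->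
  decay_bound (fourier_re A B xi t) (Ma + Mb) /\ decay_bound (fourier_im A B xi t) (Mb + Ma).
Proof.
  intros DA DB. split.
  - apply (decay_bound_comb (A t) (B t) (fun y => cos (y * xi)) (fun y => sin (y * xi)));
      auto using Rabs_cos_le_1, Rabs_sin_le_1.
  - intro x. rewrite fourier_im_as_comb.
    refine (decay_bound_comb (B t) (A t) (fun y => cos (y * xi)) (fun y => - sin (y * xi))
      _ _ DB DA _ _ x); intro y; rewrite ?Rabs_Ropp; auto using Rabs_cos_le_1, Rabs_sin_le_1.
Qed.

Lemma decaying_fourier A B xi t : decaying (A t) -> decaying (B t) ->
  decaying (fourier_re A B xi t) /\ decaying (fourier_im A B xi t).
Proof.
  intros DA DB. split.
  - apply (decaying_comb (A t) (B t) (fun y => cos (y * xi)) (fun y => sin (y * xi)));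
      auto using Rabs_cos_le_1, Rabs_sin_le_1, continuous_cos_mult.
    intro x. apply (ex_derive_continuous (V := R_NormedModule)). auto_derive; auto.
  - apply decaying_ext with (fun x => B t x * cos (x * xi) + A t x * - sin (x * xi)).
    + intro; symmetry; apply fourier_im_as_comb.
    + apply (decaying_comb (B t) (A t) (fun y => cos (y * xi)) (fun y => - sin (y * xi)));
        auto using continuous_cos_mult, continuous_opp_sin_mult, Rabs_cos_le_1;
        intro; rewrite Rabs_Ropp; apply Rabs_sin_le_1.
Qed.

Lemma uniformly_decaying_fourier A B xi : uniformly_decaying A -> uniformly_decaying B ->
  uniformly_decaying (fourier_re A B xi) /\ uniformly_decaying (fourier_im A B xi).
Proof.
  intros DA DB. split.
  - apply (uniformly_decaying_comb A B (fun y => cos (y * xi)) (fun y => sin (y * xi)));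
      auto using Rabs_cos_le_1, Rabs_sin_le_1, continuous_cos_mult.
    intro x. apply (ex_derive_continuous (V := R_NormedModule)). auto_derive; auto.
  - apply uniformly_decaying_ext with (fun t x => B t x * cos (x * xi) + A t x * - sin (x * xi)).
    + intros; symmetry; apply fourier_im_as_comb.
    + apply (uniformly_decaying_comb B A (fun y => cos (y * xi)) (fun y => - sin (y * xi)));
        auto using continuous_cos_mult, continuous_opp_sin_mult, Rabs_cos_le_1;
        intro; rewrite Rabs_Ropp; apply Rabs_sin_le_1.
Qed.

Lemma is_RInt_gen_pair (g : R -> C) Fa Fb {FFa : Filter Fa} {FFb : Filter Fb} l1 l2 :
  is_RInt_gen (fun x => fst (g x)) Fa Fb l1 -> is_RInt_gen (fun x => snd (g x)) Fa Fb l2 ->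
  @is_RInt_gen C_R_NormedModule g Fa Fb (l1, l2).
Proof.
  intros H1 H2 P [eps HP].
  specialize (H1 (ball l1 eps) (locally_ball l1 eps)).
  specialize (H2 (ball l2 eps) (locally_ball l2 eps)).
  unfold filtermapi in *. generalize (filter_and _ _ H1 H2).
  apply filter_imp. intros ab [[y1 [I1 B1]] [y2 [I2 B2]]].
  exists (y1, y2). split.
  - apply (is_RInt_fct_extend_pair (U := R_NormedModule) (V := R_NormedModule)); auto.
  - apply HP. split; auto.
Qed.

Lemma fourier_x_tan g t xi : decaying_slice g t -> fourier_x g t xi = fourier_tan g xi t.
Proof.
  intros [H1 H2]. destruct (decaying_fourier (re2 g) (im2 g) xi t H1 H2) as [Dre Dim].
  unfold fourier_x.
  apply (is_RInt_gen_unique (V := C_R_CompleteNormedModule));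
    try (apply Proper_StrongProper, Rbar_locally_filter).
  apply is_RInt_gen_pair; try apply Rbar_locally_filter.
  - apply is_RInt_gen_ext with (fourier_re (re2 g) (im2 g) xi t); try apply Rbar_locally_filter.
    + apply filter_forall. intros ab x _. unfold fourier_re, re2, im2; simpl. ring.
    + apply is_RInt_gen_tan_integral; auto.
  - apply is_RInt_gen_ext with (fourier_im (re2 g) (im2 g) xi t); try apply Rbar_locally_filter.
    + apply filter_forall. intros ab x _. unfold fourier_im, re2, im2; simpl. ring.
    + apply is_RInt_gen_tan_integral; auto.
Qed.

Lemma fourier_tan_ext g g' xi t : (forall x, g t x = g' t x) -> fourier_tan g xi t = fourier_tan g' xi t.
Proof.
  intros E. unfold fourier_tan, fourier_re, fourier_im, re2, im2.
  f_equal; apply tan_integral_ext; intros; rewrite E; auto.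
Qed.

Lemma decaying_slice_ext g g' t : (forall x, g t x = g' t x) -> decaying_slice g t -> decaying_slice g' t.
Proof.
  intros E [A B].
  split; [apply decaying_ext with (re2 g t) | apply decaying_ext with (im2 g t)]; auto;
    intro x; unfold re2, im2; rewrite E; auto.
Qed.

Lemma decaying_slice_lin g1 g2 (k1 k2 : C) t : decaying_slice g1 t -> decaying_slice g2 t ->
  decaying_slice (fun t x => k1 * g1 t x + k2 * g2 t x)%C t.
Proof.
  intros [A1 A2] [B1 B2]. split.
  - apply decaying_ext with (fun x => (fst k1 * re2 g1 t x + (- snd k1) * im2 g1 t x) +
      (fst k2 * re2 g2 t x + (- snd k2) * im2 g2 t x)); [intros; unfold re2, im2; simpl; ring|].
    repeat apply decaying_plus; apply decaying_scal; auto.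
  - apply decaying_ext with (fun x => (fst k1 * im2 g1 t x + snd k1 * re2 g1 t x) +
      (fst k2 * im2 g2 t x + snd k2 * re2 g2 t x)); [intros; unfold re2, im2; simpl; ring|].
    repeat apply decaying_plus; apply decaying_scal; auto.
Qed.

Lemma fourier_tan_lin g1 g2 (k1 k2 : C) xi t : decaying_slice g1 t -> decaying_slice g2 t ->
  fourier_tan (fun t x => k1 * g1 t x + k2 * g2 t x)%C xi t =
  (k1 * fourier_tan g1 xi t + k2 * fourier_tan g2 xi t)%C.
Proof.
  intros [A1 A2] [B1 B2].
  destruct (decaying_fourier (re2 g1) (im2 g1) xi t A1 A2) as [R1 I1].
  destruct (decaying_fourier (re2 g2) (im2 g2) xi t B1 B2) as [R2 I2].
  unfold fourier_tan.
  set (r1 := fourier_re (re2 g1) (im2 g1) xi t) in *. set (i1 := fourier_im (re2 g1) (im2 g1) xi t) in *.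
  set (r2 := fourier_re (re2 g2) (im2 g2) xi t) in *. set (i2 := fourier_im (re2 g2) (im2 g2) xi t) in *.
  apply injective_projections; simpl.
  - rewrite (tan_integral_ext _ (fun x => 1 * (fst k1 * r1 x + (- snd k1) * i1 x)
        + 1 * (fst k2 * r2 x + (- snd k2) * i2 x)))
      by (intros; unfold r1, i1, r2, i2, fourier_re, fourier_im, re2, im2; simpl; ring).
    rewrite !tan_integral_lin; auto; try ring; apply decaying_plus; apply decaying_scal; auto.
  - rewrite (tan_integral_ext _ (fun x => 1 * (fst k1 * i1 x + snd k1 * r1 x)
        + 1 * (fst k2 * i2 x + snd k2 * r2 x)))
      by (intros; unfold r1, i1, r2, i2, fourier_re, fourier_im, re2, im2; simpl; ring).
    rewrite !tan_integral_lin; auto; try ring; apply decaying_plus; apply decaying_scal; auto.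
Qed.

Lemma decay_bound_of_moments (h : R -> R) M0 M4 :
  (forall x, Rabs (h x) <= M0) -> (forall x, Rabs (x ^ 4) * Rabs (h x) <= M4) ->
  decay_bound h (2 * M0 + 2 * M4).
Proof.
  intros B0 B4 x. specialize (B0 x); specialize (B4 x).
  rewrite Rabs_pos_eq in B4 by (replace (x ^ 4) with ((x ^ 2) ^ 2) by ring; apply pow2_ge_0).
  pose proof (Rabs_pos (h x)).
  assert ((1 + x ^ 2) ^ 2 <= 2 + 2 * x ^ 4) by (pose proof (pow2_ge_0 (x ^ 2 - 1)); nra).
  nra.
Qed.

Lemma Cmod_fourier_tan_le g xi t M : decaying_slice g t ->
  (forall x, Cmod (g t x) <= M) -> (forall x, Rabs (x ^ 4) * Cmod (g t x) <= M) ->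
  Cmod (fourier_tan g xi t) <= 2 * (PI * (8 * M)).
Proof.
  intros [S1 S2] B0 B4.
  assert (D : forall p : C -> R, (forall z, Rabs (p z) <= Cmod z) ->
    decay_bound (fun x => p (g t x)) (2 * M + 2 * M)).
  { intros p Hp. apply decay_bound_of_moments; intro x.
    - eapply Rle_trans, B0. apply Hp.
    - eapply Rle_trans, B4. apply Rmult_le_compat_l; [apply Rabs_pos | apply Hp]. }
  destruct (decay_bound_fourier (re2 g) (im2 g) xi t _ _
    (D fst Rabs_fst_le_Cmod) (D snd Rabs_snd_le_Cmod)) as [E1 E2].
  destruct (decaying_fourier (re2 g) (im2 g) xi t S1 S2) as [F1 F2].
  replace (8 * M) with (2 * M + 2 * M + (2 * M + 2 * M)) by ring.
  apply Cmod_le_of_components; apply tan_integral_bound; auto.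
Qed.

Lemma DtxC_0_0 g t x : DtxC 0 0 g t x = g t x.
Proof. unfold DtxC; simpl; unfold reC, imC; destruct (g t x); reflexivity. Qed.

Lemma Schwartz_uniformly_decaying f a b : Schwartz f ->
  uniformly_decaying (Dword (repeat true a ++ repeat false b) (re2 f)) /\
  uniformly_decaying (Dword (repeat true a ++ repeat false b) (im2 f)).
Proof.
  intros [_ [S1 [S2 B]]]. destruct (B a b 0%nat) as [M0 H0], (B a b 4%nat) as [M4 H4].
  assert (D : forall p : C -> R, (forall z, Rabs (p z) <= Cmod z) ->
    forall t, decay_bound (fun x => p (DtxC a b f t x)) (2 * M0 + 2 * M4)).
  { intros p Hp t. apply decay_bound_of_moments; intro x.
    - specialize (H0 t x). simpl in H0. rewrite Rabs_R1, Rmult_1_l in H0.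
      eapply Rle_trans, H0. apply Hp.
    - eapply Rle_trans, H4. apply Rmult_le_compat_l; [apply Rabs_pos | apply Hp]. }
  split; split.
  - intros t x; apply continuity_2d_pt_filterlim, S1.
  - exists (2 * M0 + 2 * M4). exact (D fst Rabs_fst_le_Cmod).
  - intros t x; apply continuity_2d_pt_filterlim, S2.
  - exists (2 * M0 + 2 * M4). exact (D snd Rabs_snd_le_Cmod).
Qed.

Lemma Schwartz_decaying_slice f a b t : Schwartz f -> decaying_slice (DtxC a b f) t.
Proof.
  intros Sf. destruct (Schwartz_uniformly_decaying f a b Sf).
  split; apply uniformly_decaying_slice; auto.
Qed.

Lemma is_derive_fourier_t A B xi t x :
  ex_derive (fun s => A s x) t -> ex_derive (fun s => B s x) t ->
  is_derive (fun s => fourier_re A B xi s x) t (fourier_re (Dt A) (Dt B) xi t x) /\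
  is_derive (fun s => fourier_im A B xi s x) t (fourier_im (Dt A) (Dt B) xi t x).
Proof.
  intros HA HB. apply Derive_correct in HA, HB.
  pose proof (is_derive_const_R (cos (x * xi)) t) as Cc.
  pose proof (is_derive_const_R (sin (x * xi)) t) as Cs.
  unfold fourier_re, fourier_im, Dt. split.
  - eapply is_derive_eq_R; [apply is_derive_plus_R; apply is_derive_mult_R; eauto|].
    simpl; ring.
  - eapply is_derive_eq_R; [apply is_derive_minus_R; apply is_derive_mult_R; eauto|].
    simpl; ring.
Qed.

Lemma Schwartz_fourier_derive_n f xi n t : Schwartz f ->
  (ex_derive_n (fun t => fst (fourier_tan f xi t)) n t /\
   Derive_n (fun t => fst (fourier_tan f xi t)) n t = fst (fourier_tan (DtxC n 0 f) xi t)) /\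
  (ex_derive_n (fun t => snd (fourier_tan f xi t)) n t /\
   Derive_n (fun t => snd (fourier_tan f xi t)) n t = snd (fourier_tan (DtxC n 0 f) xi t)).
Proof.
  intros Sf. set (w k := repeat true k ++ repeat false 0).
  assert (Hex : forall k s x, ex_derive (fun y => Dword (w k) (re2 f) y x) s /\
                              ex_derive (fun y => Dword (w k) (im2 f) y x) s).
  { destruct Sf as [_ [S1 [S2 _]]]. intros k s x.
    split; [apply (proj1 (proj2 (S1 (w k)))) | apply (proj1 (proj2 (S2 (w k))))]. }
  assert (U : forall k, uniformly_decaying (fourier_re (Dword (w k) (re2 f)) (Dword (w k) (im2 f)) xi) /\
                        uniformly_decaying (fourier_im (Dword (w k) (re2 f)) (Dword (w k) (im2 f)) xi))
    by (intro k; apply uniformly_decaying_fourier; apply Schwartz_uniformly_decaying; auto).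
  split.
  - apply (tan_integral_derive_n (fun k => fourier_re (Dword (w k) (re2 f)) (Dword (w k) (im2 f)) xi)).
    + intro k; apply U.
    + intros k s x. destruct (Hex k s x) as [H1 H2].
      exact (ex_intro _ _ (proj1 (is_derive_fourier_t _ _ xi s x H1 H2))).
    + intros k s x. destruct (Hex k s x) as [H1 H2].
      symmetry; apply is_derive_unique, (proj1 (is_derive_fourier_t _ _ xi s x H1 H2)).
  - apply (tan_integral_derive_n (fun k => fourier_im (Dword (w k) (re2 f)) (Dword (w k) (im2 f)) xi)).
    + intro k; apply U.
    + intros k s x. destruct (Hex k s x) as [H1 H2].
      exact (ex_intro _ _ (proj2 (is_derive_fourier_t _ _ xi s x H1 H2))).
    + intros k s x. destruct (Hex k s x) as [H1 H2].
      symmetry; apply is_derive_unique, (proj2 (is_derive_fourier_t _ _ xi s x H1 H2)).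
Qed.

Lemma Schwartz_fourier_Csmooth f xi : Schwartz f -> Csmooth (fourier_tan f xi).
Proof. intros Sf; split; intros n t; apply (Schwartz_fourier_derive_n f xi n t Sf). Qed.

Lemma Schwartz_fourier_periodic f xi t : Schwartz f ->
  fourier_tan f xi (t + 2 * PI) = fourier_tan f xi t.
Proof.
  intros [P _]. unfold fourier_tan, fourier_re, fourier_im, re2, im2.
  f_equal; apply tan_integral_ext; intros; rewrite P; auto.
Qed.

Lemma Schwartz_fourier_x f xi t : Schwartz f -> fourier_x f t xi = fourier_tan f xi t.
Proof. intros Sf. apply fourier_x_tan, (Schwartz_decaying_slice f 0 0 t Sf). Qed.

Lemma Schwartz_fourier_Cinf_T1 f xi : Schwartz f -> Cinf_T1 (fun t => fourier_x f t xi).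
Proof.
  intros Sf. destruct (Schwartz_fourier_Csmooth f xi Sf) as [S1 S2]. split; [|split].
  - intro t. rewrite !Schwartz_fourier_x by auto. apply Schwartz_fourier_periodic; auto.
  - eapply smooth1_ext, S1. intro; unfold reC; rewrite Schwartz_fourier_x; auto.
  - eapply smooth1_ext, S2. intro; unfold imC; rewrite Schwartz_fourier_x; auto.
Qed.

Lemma is_Cderive_fourier_tan f xi t : Schwartz f ->
  is_Cderive (fourier_tan f xi) t (fourier_tan (DtxC 1 0 f) xi t).
Proof.
  intros Sf. destruct (Schwartz_fourier_derive_n f xi 1 t Sf) as [[A1 A2] [B1 B2]]. split.
  - eapply is_derive_eq_R; [apply Derive_correct, A1 | exact A2].
  - eapply is_derive_eq_R; [apply Derive_correct, B1 | exact B2].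
Qed.

(* Integration by parts in x: the boundary terms vanish by decay at infinity. *)
Lemma fourier_tan_Dx f xi t : Schwartz f ->
  fourier_tan (DtxC 0 1 f) xi t = (RtoC xi * Ci * fourier_tan f xi t)%C.
Proof.
  intros Sf. pose proof Sf as [_ [S1 [S2 _]]].
  assert (XR : forall x, is_derive (re2 f t) x (re2 (DtxC 0 1 f) t x))
    by (intro x; apply Derive_correct, (proj2 (proj2 (S1 nil)))).
  assert (XI : forall x, is_derive (im2 f t) x (im2 (DtxC 0 1 f) t x))
    by (intro x; apply Derive_correct, (proj2 (proj2 (S2 nil)))).
  assert (XC : forall x, is_derive (fun y => cos (y * xi)) x (- (xi * sin (x * xi))))
    by (intro; auto_derive; auto; ring).
  assert (XS : forall x, is_derive (fun y => sin (y * xi)) x (xi * cos (x * xi)))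
    by (intro; auto_derive; auto; ring).
  destruct (Schwartz_decaying_slice f 0 0 t Sf) as [D1 D2].
  destruct (Schwartz_decaying_slice f 0 1 t Sf) as [E1 E2].
  destruct (decaying_fourier (re2 f) (im2 f) xi t D1 D2) as [R0 I0].
  destruct (decaying_fourier (re2 (DtxC 0 1 f)) (im2 (DtxC 0 1 f)) xi t E1 E2) as [R1 I1].
  set (r0 := fourier_re (re2 f) (im2 f) xi t) in *.
  set (i0 := fourier_im (re2 f) (im2 f) xi t) in *.
  set (r1 := fourier_re (re2 (DtxC 0 1 f)) (im2 (DtxC 0 1 f)) xi t) in *.
  set (i1 := fourier_im (re2 (DtxC 0 1 f)) (im2 (DtxC 0 1 f)) xi t) in *.
  assert (A : 1 * tan_integral r1 + xi * tan_integral i0 = 0).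
  { rewrite <- tan_integral_lin by auto.
    apply (tan_integral_derive_zero r0); [| auto | apply decaying_plus; apply decaying_scal; auto].
    intro x. eapply is_derive_eq_R.
    - apply is_derive_plus_R; apply is_derive_mult_R; auto.
    - unfold r1, i0, fourier_re, fourier_im. simpl. ring. }
  assert (B : 1 * tan_integral i1 + (- xi) * tan_integral r0 = 0).
  { rewrite <- tan_integral_lin by auto.
    apply (tan_integral_derive_zero i0); [| auto | apply decaying_plus; apply decaying_scal; auto].
    intro x. eapply is_derive_eq_R.
    - apply is_derive_minus_R; apply is_derive_mult_R; auto.
    - unfold i1, r0, fourier_re, fourier_im. simpl. ring. }
  unfold fourier_tan. fold r0 i0 r1 i1.
  apply injective_projections; simpl; lra.
Qed.

(** * The periodic first-order linear equation *)

Definition ode_coef (c : R -> C) (q : C) (xi t : R) : C := (Ci * (RtoC xi * c t - Ci * q))%C.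

Definition integrating_factor (c : R -> C) (q : C) (xi t : R) : C :=
  Cexp (Cprimitive (ode_coef c q xi) t).

Definition ode_solution (c : R -> C) (q : C) (xi : R) (F : R -> C) (w0 : C) (t : R) : C :=
  (Cexp (- Cprimitive (ode_coef c q xi) t) *
   (w0 + Cprimitive (fun s => integrating_factor c q xi s * F s) t))%C.

Lemma Cprimitive_Cderive (u g : R -> C) t :
  Csmooth u -> (forall s, is_Cderive u s (g s)) -> Cprimitive g t = (u t - u 0)%C.
Proof.
  intros [U1 U2] Du. unfold Cprimitive.
  assert (E1 : forall s, fst (g s) = Derive (fun s => fst (u s)) s)
    by (intro s; symmetry; apply is_derive_unique, Du).
  assert (E2 : forall s, snd (g s) = Derive (fun s => snd (u s)) s)
    by (intro s; symmetry; apply is_derive_unique, Du).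
  rewrite (RInt_ext _ _ _ _ (fun s _ => E1 s)), (RInt_ext _ _ _ _ (fun s _ => E2 s)).
  rewrite !RInt_Derive; auto using smooth1_ex_derive, smooth1_continuous, smooth1_Derive.
Qed.

Lemma affine_fixed_point (m j : C) : (m = 1%C -> j = 0%C) -> exists w0, (m * (w0 + j))%C = w0.
Proof.
  intros H. destruct (classic (m = 1%C)) as [e|n].
  - exists 0%C. rewrite (H e), e. ring.
  - exists (m * j / (1 - m))%C. field.
    intro K. apply n. transitivity (1 - (1 - m))%C; [ring|]. rewrite K. ring.
Qed.

Section IntegratingFactor.

Variables (c : R -> C) (q : C) (xi : R).
Hypothesis Hc : Cinf_T1 c.

Lemma Csmooth_ode_coef : Csmooth (ode_coef c q xi).
Proof.
  destruct Hc as [_ Sc]. unfold ode_coef, Cminus.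
  apply Csmooth_mult, Csmooth_plus; auto using Csmooth_const, Csmooth_mult.
Qed.

Lemma ode_coef_periodic t : ode_coef c q xi (t + 2 * PI) = ode_coef c q xi t.
Proof. destruct Hc as [P _]. unfold ode_coef. rewrite P. reflexivity. Qed.

Lemma is_Cderive_integrating_factor t :
  is_Cderive (integrating_factor c q xi) t (ode_coef c q xi t * integrating_factor c q xi t)%C.
Proof.
  apply (is_Cderive_Cexp (Cprimitive (ode_coef c q xi))), is_Cderive_Cprimitive.
  apply Csmooth_continuous, Csmooth_ode_coef.
Qed.

Lemma Csmooth_integrating_factor : Csmooth (integrating_factor c q xi).
Proof.
  apply (Csmooth_of_linear_ode (ode_coef c q xi) (fun _ => 0%C));
    auto using Csmooth_ode_coef, Csmooth_const.
  intro t. eapply is_Cderive_eq; [apply is_Cderive_integrating_factor | ring].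
Qed.

Lemma integrating_factor_0 : integrating_factor c q xi 0 = 1%C.
Proof. unfold integrating_factor. rewrite Cprimitive_0. apply Cexp_0. Qed.

Lemma Cprimitive_ode_coef_shift t :
  Cprimitive (ode_coef c q xi) (t + 2 * PI) =
  (Cprimitive (ode_coef c q xi) (2 * PI) + Cprimitive (ode_coef c q xi) t)%C.
Proof.
  rewrite Cprimitive_shift by apply Csmooth_continuous, Csmooth_ode_coef.
  f_equal. apply Cprimitive_ext, ode_coef_periodic.
Qed.

Lemma integrating_factor_shift t :
  integrating_factor c q xi (t + 2 * PI) =
  (integrating_factor c q xi (2 * PI) * integrating_factor c q xi t)%C.
Proof. unfold integrating_factor. rewrite Cprimitive_ode_coef_shift. apply Cexp_plus. Qed.

End IntegratingFactor.

Section PeriodicSolution.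

Variables (c : R -> C) (q : C) (xi : R) (F : R -> C).
Hypothesis Hc : Cinf_T1 c.
Hypothesis HF : Cinf_T1 F.

Lemma Ccontinuous_integrating_factor_mult : Ccontinuous (fun s => integrating_factor c q xi s * F s)%C.
Proof.
  apply Csmooth_continuous, Csmooth_mult; [apply Csmooth_integrating_factor; auto | apply HF].
Qed.

Lemma is_Cderive_ode_solution w0 t :
  is_Cderive (ode_solution c q xi F w0) t (- ode_coef c q xi t * ode_solution c q xi F w0 t + F t)%C.
Proof.
  unfold ode_solution.
  set (A := Cprimitive (ode_coef c q xi)).
  set (J := Cprimitive (fun s => integrating_factor c q xi s * F s)%C).
  eapply is_Cderive_eq.
  - apply is_Cderive_mult.
    + apply (is_Cderive_Cexp (fun s => - A s)%C), is_Cderive_opp, is_Cderive_Cprimitive.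
      apply Csmooth_continuous, Csmooth_ode_coef; auto.
    + apply is_Cderive_plus; [apply is_Cderive_const |].
      apply is_Cderive_Cprimitive, Ccontinuous_integrating_factor_mult.
  - pose proof (Cexp_opp_mul (A t)) as Inv.
    change (integrating_factor c q xi t) with (Cexp (A t)).
    transitivity (- ode_coef c q xi t * (Cexp (- A t) * (w0 + J t)) +
      (Cexp (- A t) * Cexp (A t)) * F t)%C; [ring|].
    rewrite Inv. ring.
Qed.

Lemma ode_solution_eq w0 t :
  (Cderive (ode_solution c q xi F w0) t + ode_coef c q xi t * ode_solution c q xi F w0 t)%C = F t.
Proof. rewrite (is_Cderive_Cderive _ _ _ (is_Cderive_ode_solution w0 t)). ring. Qed.

Lemma Csmooth_ode_solution w0 : Csmooth (ode_solution c q xi F w0).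
Proof.
  apply (Csmooth_of_linear_ode (fun t => - ode_coef c q xi t)%C F).
  - apply Csmooth_ext with (fun t => (-1) * ode_coef c q xi t)%C; [intro; ring|].
    apply Csmooth_mult; auto using Csmooth_const, Csmooth_ode_coef.
  - apply HF.
  - apply is_Cderive_ode_solution.
Qed.

Lemma Cprimitive_forcing_shift t :
  Cprimitive (fun s => integrating_factor c q xi s * F s)%C (t + 2 * PI) =
  (Cprimitive (fun s => integrating_factor c q xi s * F s)%C (2 * PI) +
   integrating_factor c q xi (2 * PI) *
   Cprimitive (fun s => integrating_factor c q xi s * F s)%C t)%C.
Proof.
  destruct HF as [PF _].
  rewrite Cprimitive_shift by apply Ccontinuous_integrating_factor_mult. f_equal.
  rewrite <- Cprimitive_scal by apply Ccontinuous_integrating_factor_mult.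
  apply Cprimitive_ext. intro s. rewrite integrating_factor_shift, PF by auto. ring.
Qed.

Lemma ode_solution_periodic w0 :
  (Cexp (- Cprimitive (ode_coef c q xi) (2 * PI)) *
   (w0 + Cprimitive (fun s => integrating_factor c q xi s * F s) (2 * PI)))%C = w0 ->
  periodic1 (ode_solution c q xi F w0).
Proof.
  intros Hw0 t. unfold ode_solution.
  rewrite Cprimitive_ode_coef_shift, Cprimitive_forcing_shift, Copp_plus_distr, Cexp_plus by auto.
  set (A := Cprimitive (ode_coef c q xi)) in *.
  set (J := Cprimitive (fun s => integrating_factor c q xi s * F s)%C) in *.
  pose proof (Cexp_opp_mul (A (2 * PI))) as Inv.
  change (integrating_factor c q xi (2 * PI)) with (Cexp (A (2 * PI))).
  set (T := (2 * PI)%R) in *.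
  transitivity (Cexp (- A t) * (Cexp (- A T) * (w0 + J T)) +
    (Cexp (- A T) * Cexp (A T)) * (Cexp (- A t) * J t))%C; [ring|].
  rewrite Hw0, Inv. ring.
Qed.

Theorem periodic_ode_solvable w0 :
  (Cexp (- Cprimitive (ode_coef c q xi) (2 * PI)) *
   (w0 + Cprimitive (fun s => integrating_factor c q xi s * F s) (2 * PI)))%C = w0 ->
  exists w, Cinf_T1 w /\ forall t, (Cderive w t + ode_coef c q xi t * w t)%C = F t.
Proof.
  intros Hw0. exists (ode_solution c q xi F w0). split; [split|].
  - apply ode_solution_periodic; auto.
  - apply Csmooth_ode_solution.
  - apply ode_solution_eq.
Qed.

End PeriodicSolution.

(** * The distribution that obstructs periodicity *)

Definition resonance_functional (c : R -> C) (q : C) (xi : R) (g : R -> R -> C) : C :=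
  Cprimitive (fun s => integrating_factor c q xi s * fourier_x g s xi)%C (2 * PI).

Section ResonanceFunctional.

Variables (c : R -> C) (q : C) (xi : R).
Hypothesis Hc : Cinf_T1 c.

Lemma Ccontinuous_integrating_factor_fourier g : Schwartz g ->
  Ccontinuous (fun s => integrating_factor c q xi s * fourier_x g s xi)%C.
Proof. intros Sg. apply Ccontinuous_integrating_factor_mult; auto. apply Schwartz_fourier_Cinf_T1; auto. Qed.

Lemma resonance_functional_linear : linear_on_S (resonance_functional c q xi).
Proof.
  intros g h a b Sg Sh. unfold resonance_functional.
  rewrite (Cprimitive_ext _ (fun s =>
    a * (integrating_factor c q xi s * fourier_x g s xi) +
    b * (integrating_factor c q xi s * fourier_x h s xi))%C).
  - rewrite Cprimitive_plus, !Cprimitive_scal;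
      auto using Ccontinuous_integrating_factor_fourier, Ccontinuous_mult, Ccontinuous_const.
  - intro s.
    assert (Dg : decaying_slice g s) by apply (Schwartz_decaying_slice g 0 0 s Sg).
    assert (Dh : decaying_slice h s) by apply (Schwartz_decaying_slice h 0 0 s Sh).
    rewrite fourier_x_tan, fourier_tan_lin, !Schwartz_fourier_x by auto using decaying_slice_lin.
    ring.
Qed.

Lemma resonance_functional_continuous : continuous_on_S (resonance_functional c q xi).
Proof.
  pose proof PI_RGT_0.
  destruct (Ccontinuous_bounded (integrating_factor c q xi) 0 (2 * PI)) as [B HB];
    [lra | apply Csmooth_continuous, Csmooth_integrating_factor; auto |].
  exists 4%nat, (2 * (2 * PI * (B * (2 * (PI * 8))))). intros g M Sg HM.
  assert (B0 : forall t x, Cmod (g t x) <= M).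
  { intros t x. rewrite <- DtxC_0_0.
    specialize (HM 0%nat 0%nat 0%nat ltac:(lia) ltac:(lia) ltac:(lia) t x).
    simpl in HM. rewrite Rabs_R1, Rmult_1_l in HM. exact HM. }
  assert (B4 : forall t x, Rabs (x ^ 4) * Cmod (g t x) <= M).
  { intros t x. rewrite <- DtxC_0_0. apply HM; lia. }
  replace (2 * (2 * PI * (B * (2 * (PI * 8)))) * M)
    with (2 * (2 * PI * (B * (2 * (PI * (8 * M)))))) by ring.
  apply Cmod_Cprimitive_le; [lra | apply Ccontinuous_integrating_factor_fourier; auto |].
  intros s Hs. rewrite Cmod_mult, Schwartz_fourier_x by auto.
  apply Rmult_le_compat; auto using Cmod_ge_0.
  apply Cmod_fourier_tan_le; auto. apply (Schwartz_decaying_slice g 0 0); auto.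
Qed.

Lemma fourier_x_Lop phi s : Schwartz phi ->
  fourier_x (Lop c q phi) s xi =
  (fourier_tan (DtxC 1 0 phi) xi s + ode_coef c q xi s * fourier_tan phi xi s)%C.
Proof.
  intros Sp.
  assert (D0 : decaying_slice phi s) by apply (Schwartz_decaying_slice phi 0 0 s Sp).
  set (G := fun t x => (1 * DtxC 1 0 phi t x + 1 * (c s * DtxC 0 1 phi t x + q * phi t x))%C).
  assert (E : forall x, Lop c q phi s x = G s x) by (intro x; unfold G, Lop; ring).
  assert (D : decaying_slice G s)
    by (apply decaying_slice_lin, decaying_slice_lin; auto using Schwartz_decaying_slice).
  rewrite fourier_x_tan by (apply decaying_slice_ext with G; auto).
  rewrite (fourier_tan_ext _ G xi s E). unfold G.
  rewrite fourier_tan_lin by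
    (auto using Schwartz_decaying_slice; apply decaying_slice_lin; auto using Schwartz_decaying_slice).
  rewrite (fourier_tan_lin (DtxC 0 1 phi) phi) by auto using Schwartz_decaying_slice.
  rewrite fourier_tan_Dx by auto. unfold ode_coef.
  apply injective_projections; simpl; ring.
Qed.

Lemma resonance_functional_in_ker :
  Cexp (- Cprimitive (ode_coef c q xi) (2 * PI)) = 1%C ->
  in_ker_Lt c q (resonance_functional c q xi).
Proof.
  intros Hres phi Sp.
  assert (E2PI : integrating_factor c q xi (2 * PI) = 1%C).
  { pose proof (Cexp_opp_mul (Cprimitive (ode_coef c q xi) (2 * PI))) as H.
    rewrite Hres, Cmult_1_l in H. exact H. }
  unfold resonance_functional.
  rewrite (Cprimitive_Cderive (fun s => integrating_factor c q xi s * fourier_tan phi xi s)%C).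
  - assert (P : fourier_tan phi xi (2 * PI) = fourier_tan phi xi 0)
      by (rewrite <- (Schwartz_fourier_periodic phi xi 0 Sp), Rplus_0_l; reflexivity).
    rewrite P, E2PI, integrating_factor_0 by auto. ring.
  - apply Csmooth_mult; [apply Csmooth_integrating_factor | apply Schwartz_fourier_Csmooth]; auto.
  - intro s. eapply is_Cderive_eq.
    + apply is_Cderive_mult; [apply is_Cderive_integrating_factor | apply is_Cderive_fourier_tan]; auto.
    + rewrite fourier_x_Lop by auto. ring.
Qed.

End ResonanceFunctional.

Theorem lemma5p2 (c : R -> C) (q : C) (f : R -> R -> C) :
  Cinf_T1 c ->
  annihilator_ker_Lt c q f ->
  forall xi : R, exists w : R -> C,
    Cinf_T1 w /\
    forall t : R,
      (Cderive w t + Ci * (RtoC xi * c t - Ci * q) * w t)%C = fourier_x f t xi.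
Proof.
  intros Hc [Sf Hf] xi.
  destruct (affine_fixed_point (Cexp (- Cprimitive (ode_coef c q xi) (2 * PI)))
    (resonance_functional c q xi f)) as [w0 Hw0].
  - intro Hres. apply Hf; [split | apply resonance_functional_in_ker]; auto.
    + apply resonance_functional_linear; auto.
    + apply resonance_functional_continuous; auto.
  - exact (periodic_ode_solvable c q xi _ Hc (Schwartz_fourier_Cinf_T1 f xi Sf) w0 Hw0).
Qed.
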